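(* For every functor $F\colon(\mathcal C^\eta)^{\times n}\to\mathsf{Ch}(R)$, the diagram \[tF\xrightarrow{\xi_F}ttF\xrightarrow{t(\xi_F)}tttF\qquad\text{and}\qquad tF\xrightarrow{\xi_F}ttF\xrightarrow{\xi_{tF}}tttF\] commutes, i.e. $t(\xi_F)\circ\xi_F=\xi_{tF}\circ\xi_F$.
   Context: $R$ is a commutative ring, $\mathsf{Ch}(R)$ the category of unbounded chain complexes of $R$-modules. $\mathcal C$ is a simplicial model category, $\eta\colon A\to B$ a morphism, $\mathcal C^\eta$ the category of factorizations $A\to X\to B$ of $\eta$. For $\mathbf X=(X_1,\dots,X_n)$ and $U\subseteq\mathbf n=\{1,\dots,n\}$, $\mathbf X(U)$ is the $n$-tuple with $i$th entry $X_i$ if $i\notin U$, $B$ if $i\in U$. For $G\colon(\mathcal C^\eta)^{\times n}\to\mathsf{Ch}(R)$, $tG(\mathbf X)$ is the chain complex with $tG(\mathbf X)_k=\bigoplus_{T\subseteq\mathbf n}G(\mathbf X(T))_{k+|T|}$ and differential sending $x$ in summand $T$ to $(-1)^{|T|}d(x)+\sum_{i\notin T}(-1)^{|\{s\in T:s>i\}|+1}G(\mathbf X(T)\to\mathbf X(T\cup\{i\}))(x)$ (term $i$ in summand $T\cup\{i\}$); $t$ is an endofunctor of the functor category, acting on natural transformations componentwise on summands. Thus $ttG(\mathbf X)_k=\bigoplus_{(V,U)\in\mathcal P(\mathbf n)^2}G(\mathbf X(U\cup V))_{k+|U|+|V|}$, $U$ the outer and $V$ the inner index. Identify $(V,U)$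 with the $2\times n$ $0/1$ matrix with first row the indicator of $V$, second row that of $U$. $M_{2n}(T)$ is the set of $2\times n$ $0/1$ matrices whose column sums are $1$ in columns $j\in T$ and $0$ otherwise; $\operatorname{sgn}(W)=|\{(i,j):i<j,\ w_{2i}=w_{1j}=1\}|$. For any $G$, $\xi_G\colon tG\to ttG$ sends $y\in G(\mathbf X(T))_{k+|T|}$ to $\sum_{W\in M_{2n}(T)}(-1)^{\operatorname{sgn}(W)}y$, the $W$-term in the summand indexed by the pair corresponding to $W$. *)

From HB Require Import structures.
From mathcomp Require Import all_boot all_order all_algebra.
From Stdlib Require Import FunctionalExtensionality.
Set Implicit Arguments. Unset Strict Implicit. Unset Printing Implicit Defensive.
Import GRing.Theory.
Local Open Scope ring_scope.

Section DSum.
Variables (R : comPzRingType) (I : finType) (M : I -> lmodType R).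
Definition dsum := {dffun forall i : I, M i}.
HB.instance Definition _ := Choice.on dsum.
Definition dsum0 : dsum := [ffun i => 0].
Definition dsumN (x : dsum) : dsum := [ffun i => - x i].
Definition dsumD (x y : dsum) : dsum := [ffun i => x i + y i].
Definition dsumZ (a : R) (x : dsum) : dsum := [ffun i => a *: x i].
Fact dsumA : associative dsumD.
Proof. by move=> x y z; apply/ffunP=> i; rewrite !ffunE addrA. Qed.
Fact dsumC : commutative dsumD.
Proof. by move=> x y; apply/ffunP=> i; rewrite !ffunE addrC. Qed.
Fact dsum0D : left_id dsum0 dsumD.
Proof. by move=> x; apply/ffunP=> i; rewrite !ffunE add0r. Qed.
Fact dsumND : left_inverse dsum0 dsumN dsumD.
Proof. by move=> x; apply/ffunP=> i; rewrite !ffunE addNr. Qed.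
HB.instance Definition _ := GRing.isZmodule.Build dsum dsumA dsumC dsum0D dsumND.
Fact dsumZA a b (x : dsum) : dsumZ a (dsumZ b x) = dsumZ (a * b) x.
Proof. by apply/ffunP=> i; rewrite !ffunE scalerA. Qed.
Fact dsumZ1 : left_id 1 dsumZ.
Proof. by move=> x; apply/ffunP=> i; rewrite !ffunE scale1r. Qed.
Fact dsumZDr : right_distributive dsumZ +%R.
Proof. by move=> a x y; apply/ffunP=> i; rewrite !ffunE scalerDr. Qed.
Fact dsumZDl (x : dsum) : {morph dsumZ^~ x : a b / a + b}.
Proof. by move=> a b; apply/ffunP=> i; rewrite !ffunE scalerDl. Qed.
HB.instance Definition _ := GRing.Zmodule_isLmodule.Build R dsum dsumZA dsumZ1 dsumZDr dsumZDl.
End DSum.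

Record category := Category {
  catob : Type;
  cathom : catob -> catob -> Type;
  catid : forall a, cathom a a;
  catcomp : forall a b c, cathom b c -> cathom a b -> cathom a c;
  comp_idl : forall a b (f : cathom a b), catcomp (catid b) f = f;
  comp_idr : forall a b (f : cathom a b), catcomp f (catid a) = f;
  compA : forall a b c d (h : cathom c d) (g : cathom b c) (f : cathom a b),
      catcomp h (catcomp g f) = catcomp (catcomp h g) f
}.
Arguments catid {C} a : rename.
Arguments catcomp {C a b c} : rename.

Section Factorizations.
Variables (C : category) (A B : catob C) (eta : cathom A B).

Record fact := Fact {
  fob : catob C;
  fin : cathom A fob;
  fout : cathom fob B;
  fax : catcomp fout fin = eta
}.

Record fmor (X Y : fact) := Fmor {
  fmap : cathom (fob X) (fob Y);
  fmap_in : catcomp fmap (fin X) = fin Y;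
  fmap_out : catcomp (fout Y) fmap = fout X
}.

Definition fid (X : fact) : fmor X X :=
  @Fmor X X (catid _) (comp_idl (fin X)) (comp_idr (fout X)).

Definition fcomp (X Y Z : fact) (g : fmor Y Z) (f : fmor X Y) : fmor X Z.
Proof.
refine (@Fmor X Z (catcomp (fmap g) (fmap f)) _ _).
- by rewrite -compA (fmap_in f) (fmap_in g).
- by rewrite compA (fmap_out g) (fmap_out f).
Defined.

Definition factB : fact := @Fact B eta (catid B) (comp_idl eta).

Definition toB (X : fact) : fmor X factB :=
  @Fmor X factB (fout X) (fax X) (comp_idl (fout X)).

Variable n : nat.
Definition tup := 'I_n -> fact.
Definition tmor (X Y : tup) := forall i : 'I_n, fmor (X i) (Y i).
Definition tid (X : tup) : tmor X X := fun i => fid (X i).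
Definition tcomp (X Y Z : tup) (g : tmor Y Z) (f : tmor X Y) : tmor X Z :=
  fun i => fcomp (g i) (f i).

Definition rep (X : tup) (U : {set 'I_n}) : tup :=
  fun i => if i \in U then factB else X i.

Definition repmor (X : tup) (S : {set 'I_n}) : tmor X (rep X S) :=
  fun j => if j \in S as b return fmor (X j) (if b then factB else X j)
           then toB (X j) else fid (X j).

Definition replift (X Y : tup) (f : tmor X Y) (U : {set 'I_n})
  : tmor (rep X U) (rep Y U) :=
  fun j => if j \in U as b
             return fmor (if b then factB else X j) (if b then factB else Y j)
           then fid factB else f j.

Lemma rep_rep (X : tup) (U V : {set 'I_n}) : rep (rep X U) V = rep X (U :|: V).
Proof.
apply: functional_extensionality => i; rewrite /rep in_setU.
by case: (i \in V); case: (i \in U).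
Qed.
End Factorizations.

Section TotalComplex.
Variables (R : comPzRingType) (C : category) (A B : catob C) (eta : cathom A B)
          (n : nat).

Local Notation tup := (tup eta n).
Local Notation tmor := (@tmor C A B eta n).
Local Notation rep := (@rep C A B eta n).

Record chdata := ChData {
  cmod : int -> lmodType R;
  cd : forall k : int, cmod k -> cmod (k - 1)
}.
Arguments cd : clear implicits.
Arguments cmod : clear implicits.

Definition is_complex (K : chdata) : Prop :=
  (forall k, linear (cd K k)) /\ (forall k x, cd K (k - 1) (cd K k x) = 0).

Definition is_chainmap (K L : chdata) (f : forall k, cmod K k -> cmod L k) : Prop :=
  (forall k, linear (f k)) /\ (forall k x, cd L k (f k x) = f (k - 1) (cd K k x)).

Record funct := Funct {
  fobj : tup -> chdata;
  fmorph : forall X Y : tup, tmor X Y -> forall k, cmod (fobj X) k -> cmod (fobj Y) k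
}.
Arguments fobj : clear implicits.
Arguments fmorph F {X Y} f k x : rename.

Definition is_functor (F : funct) : Prop :=
  [/\ forall X, is_complex (fobj F X),
      forall X Y (f : tmor X Y), is_chainmap (fmorph F f),
      forall X k x, fmorph F (tid X) k x = x
    & forall X Y Z (g : tmor Y Z) (f : tmor X Y) k x,
        fmorph F (tcomp g f) k x = fmorph F g k (fmorph F f k (x : cmod (fobj F X) k))].

Definition nattrans (F G : funct) :=
  forall X k, cmod (fobj F X) k -> cmod (fobj G X) k.

(* transport along an equality of degrees (0 if they differ, never used) *)
Definition castd (M : int -> lmodType R) (a b : int) (x : M a) : M b :=
  match a =P b with ReflectT e => eq_rect a M x b e | ReflectF _ => 0 end.
Arguments castd M {a b} x.

Definition castob (F : funct) (Y Y' : tup) (e : Y = Y') k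
  (x : cmod (fobj F Y) k) : cmod (fobj F Y') k :=
  eq_rect Y (fun Z => cmod (fobj F Z) k) x Y' e.
Arguments castob F {Y Y'} e {k} x.

(* transport along an equality of index sets (0 if they differ) *)
Definition castset (F : funct) (X : tup) (U U' : {set 'I_n}) k
  (x : cmod (fobj F (rep X U)) k) : cmod (fobj F (rep X U')) k :=
  match U =P U' with
  | ReflectT e => eq_rect U (fun S => cmod (fobj F (rep X S)) k) x U' e
  | ReflectF _ => 0 end.
Arguments castset F X U U' {k} x.

Definition crd (T : {set 'I_n}) : int := (#|T|)%:Z.

Definition tmod (F : funct) (X : tup) (k : int) : lmodType R :=
  dsum (fun T : {set 'I_n} => cmod (fobj F (rep X T)) (k + crd T)).

Definition tdiff (F : funct) (X : tup) (k : int) (x : tmod F X k)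
  : tmod F X (k - 1) :=
  @finfun _ (fun T' : {set 'I_n} => cmod (fobj F (rep X T')) (k - 1 + crd T'))
    (fun T' =>
       (-1) ^+ #|T'| *:
          castd (cmod (fobj F (rep X T'))) (cd (fobj F (rep X T')) (k + crd T') (x T'))
     + \sum_(i in T')
         let T := T' :\ i in
         (-1) ^+ (#|[set s in T | (i < s)%N]| + 1) *:
           castd (cmod (fobj F (rep X T')))
             (castset F X (T :|: [set i])  T'
                (castob F (rep_rep X T [set i])
                   (fmorph F (repmor (rep X T) [set i]) (k + crd T) (x T))))).

Definition tfun (F : funct) : funct :=
  @Funct (fun X => @ChData (tmod F X) (@tdiff F X))
    (fun X Y f k x =>
       @finfun _ (fun T : {set 'I_n} => cmod (fobj F (rep Y T)) (k + crd T))
         (fun T => fmorph F (replift f T) (k + crd T) (x T))).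

Definition tnat (F G : funct) (alpha : nattrans F G) : nattrans (tfun F) (tfun G) :=
  fun X k x =>
    @finfun _ (fun T : {set 'I_n} => cmod (fobj G (rep X T)) (k + crd T))
      (fun T => alpha (rep X T) (k + crd T) (x T)).

(* sgn(W) for the 2 x n matrix W with first row V (inner) and second row U (outer) *)
Definition sgn (U V : {set 'I_n}) : nat :=
  #|[set p : 'I_n * 'I_n | (p.1 < p.2)%N && (p.1 \in U) && (p.2 \in V)]|.

(* xi_G : tG -> ttG ; the W-term with W <-> (V,U), V,U disjoint with union T,
   lands in the outer summand U and inner summand V. *)
Definition xi (G : funct) : nattrans (tfun G) (tfun (tfun G)) :=
  fun X k x =>
    @finfun _ (fun U : {set 'I_n} => tmod G (rep X U) (k + crd U))
      (fun U =>
         @finfun _ (fun V : {set 'I_n} =>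
                      cmod (fobj G (rep (rep X U) V)) (k + crd U + crd V))
           (fun V =>
              if [disjoint U & V] then
                (-1) ^+ sgn U V *:
                  castd (cmod (fobj G (rep (rep X U) V)))
                    (castob G (esym (rep_rep X U V)) (x (U :|: V)))
              else 0)).

End TotalComplex.

Arguments xi {R C A B eta n} G X k x.
Arguments tnat {R C A B eta n F G} alpha X k x.
Arguments tfun {R C A B eta n} F.

(* Both composites send an element x of the summand T of tF(X) to the summands
   indexed by ordered triples (U, V, W) of pairwise disjoint sets with union T,
   multiplying x by (-1)^(sgn V W + sgn U (V :|: W)) and by
   (-1)^(sgn U V + sgn (U :|: V) W) respectively, and by 0 on all other summands.
   Since sgn is additive in each argument over disjoint unions, both exponents
   equal sgn U V + sgn U W + sgn V W.  No property of F is needed. *)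

From HB Require Import structures.
From mathcomp Require Import all_boot all_order all_algebra.
From Stdlib Require Import Eqdep.
Set Implicit Arguments. Unset Strict Implicit. Unset Printing Implicit Defensive.
Import GRing.Theory.
Local Open Scope ring_scope.

Section Signs.
Variable n : nat.
Implicit Types U V W : {set 'I_n}.

Lemma sgnE U V : sgn U V = (\sum_(i in U) \sum_(j in V) (i < j))%N.
Proof.
rewrite /sgn -sum1_card pair_big_dep /= big_mkcond [RHS]big_mkcond.
apply: eq_bigr => p _; rewrite !inE.
by case: (p.1 < p.2)%N; case: (_ \in _); case: (_ \in _).
Qed.

Lemma sgnUl U V W : [disjoint U & V] -> sgn (U :|: V) W = (sgn U W + sgn V W)%N.
Proof.
by move=> dUV; rewrite !sgnE -bigU //; apply: eq_bigl => i; rewrite !inE.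
Qed.

Lemma sgnUr U V W : [disjoint V & W] -> sgn U (V :|: W) = (sgn U V + sgn U W)%N.
Proof.
move=> dVW; rewrite !sgnE -big_split; apply: eq_bigr => i _ /=.
by rewrite -bigU //; apply: eq_bigl => j; rewrite !inE.
Qed.

Lemma disjoint_setUA U V W :
  [disjoint V & W] && [disjoint U & V :|: W] =
  [disjoint U & V] && [disjoint U :|: V & W].
Proof.
rewrite -!setI_eq0 setIUl setIUr !setU_eq0.
by case: (U :&: V == set0); case: (U :&: W == set0); case: (V :&: W == set0).
Qed.

Lemma sgn_cocycle U V W : [disjoint U & V] -> [disjoint V & W] ->
  (sgn V W + sgn U (V :|: W) = sgn U V + sgn (U :|: V) W)%N.
Proof. by move=> dUV dVW; rewrite sgnUr // sgnUl // addnCA [(sgn V W + _)%N]addnC. Qed.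

Lemma crdU U V : [disjoint U & V] -> crd (U :|: V) = crd U + crd V.
Proof. by move=> dUV; rewrite /crd cardsU (disjoint_setI0 dUV) cards0 subn0 PoszD. Qed.

End Signs.

Lemma castdE (R : comPzRingType) (M : int -> lmodType R) a (u : M a) :
  castd (M := M) a u = u.
Proof. by rewrite /castd; case: eqP => // e; rewrite eq_axiomK. Qed.

Section TaggedElements.
Variables (R : comPzRingType) (C : category) (A B : catob C) (eta : cathom A B)
          (n : nat) (F : funct R eta n).
Local Notation tup := (tup eta n).

Definition fmod (p : tup * int) : Type := cmod (fobj F p.1) p.2.
(* Elements of the modules F(Y)_a, tagged with (Y, a), so that elements whose
   indices are only propositionally equal (via rep_rep and crdU) can be compared. *)
Definition tagF (Y : tup) (a : int) (u : cmod (fobj F Y) a) : {p & fmod p} :=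
  existT fmod (Y, a) u.

Lemma tagF_inj Y a (u v : cmod (fobj F Y) a) : tagF u = tagF v -> u = v.
Proof. exact: inj_pair2. Qed.

Lemma tagF_map (f : forall p, fmod p -> fmod p) Y a Y' a'
    (u : cmod (fobj F Y) a) (v : cmod (fobj F Y') a') :
  tagF u = tagF v -> tagF (f (Y, a) u) = tagF (f (Y', a') v).
Proof. exact: (f_equal (fun z => existT fmod (projT1 z) (f _ (projT2 z)))). Qed.

Lemma tagFZ c Y a Y' a' (u : cmod (fobj F Y) a) (v : cmod (fobj F Y') a') :
  tagF u = tagF v -> tagF (c *: u) = tagF (c *: v).
Proof. exact: (tagF_map (fun _ w => c *: w)). Qed.

Lemma tagF_eq0 Y a Y' a' (u : cmod (fobj F Y) a) (v : cmod (fobj F Y') a') :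
  tagF u = tagF v -> v = 0 -> u = 0.
Proof.
move=> Euv v0; apply: tagF_inj; rewrite Euv v0.
exact: esym (tagF_map (fun _ _ => 0) Euv).
Qed.

Lemma tagF_castd Y a b (u : cmod (fobj F Y) a) :
  a = b -> tagF (castd (M := cmod (fobj F Y)) b u) = tagF u.
Proof. by move=> eab; subst b; rewrite castdE. Qed.

Lemma tagF_castob Y Y' (e : Y = Y') a (u : cmod (fobj F Y) a) :
  tagF (castob e u) = tagF u.
Proof. by case: Y' / e. Qed.

Lemma tagF_cast_tfun Y Y' (e : Y = Y') a b (y : tmod F Y a) W : a = b ->
  tagF ((castd (M := tmod F Y') b (castob (F := tfun F) e y) : tmod F Y' b) W) =
  tagF (y W).
Proof. by move=> eab; subst b; rewrite castdE; case: Y' / e. Qed.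

End TaggedElements.

Lemma xi_eq0 (R : comPzRingType) (C : category) (A B : catob C) (eta : cathom A B)
    (n : nat) (G : funct R eta n) X k (x : tmod G X k) (U V : {set 'I_n}) :
  ~~ [disjoint U & V] -> xi G X k x U V = 0.
Proof. by move=> ndUV; rewrite !ffunE (negbTE ndUV). Qed.

Section XiComponents.
Variables (R : comPzRingType) (C : category) (A B : catob C) (eta : cathom A B)
          (n : nat) (F : funct R eta n).
Implicit Types (X : tup eta n) (U V W : {set 'I_n}).

Lemma tagF_xi X k (x : tmod F X k) U V : [disjoint U & V] ->
  tagF (xi F X k x U V) = tagF ((-1) ^+ sgn U V *: x (U :|: V)).
Proof.
move=> dUV; rewrite !ffunE dUV; apply: tagFZ.
by rewrite tagF_castd ?tagF_castob // crdU // addrA.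
Qed.

Lemma tagF_xi_tfun X k (z : tmod (tfun F) X k) U V W : [disjoint U & V] ->
  tagF (xi (tfun F) X k z U V W) = tagF ((-1) ^+ sgn U V *: z (U :|: V) W).
Proof.
move=> dUV; rewrite !ffunE dUV ffunE; apply: tagFZ.
by rewrite tagF_cast_tfun // crdU // addrA.
Qed.

Section Composites.
Variables (X : tup eta n) (k : int) (x : tmod F X k).

Lemma tagF_tnat_xi_xi U V W : [disjoint V & W] && [disjoint U & V :|: W] ->
  tagF (tnat (xi F) X k (xi F X k x) U V W) =
  tagF ((-1) ^+ (sgn V W + sgn U (V :|: W)) *: x (U :|: V :|: W)).
Proof.
case/andP=> dVW dUVW; rewrite ffunE tagF_xi // exprD -scalerA; apply: tagFZ.
by rewrite tagF_xi // setUA.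
Qed.

Lemma tagF_xi_tfun_xi U V W : [disjoint U & V] && [disjoint U :|: V & W] ->
  tagF (xi (tfun F) X k (xi F X k x) U V W) =
  tagF ((-1) ^+ (sgn U V + sgn (U :|: V) W) *: x (U :|: V :|: W)).
Proof.
case/andP=> dUV dUVW; rewrite tagF_xi_tfun // exprD -scalerA; apply: tagFZ.
exact: tagF_xi.
Qed.

Lemma tnat_xi_xi_eq0 U V W : ~~ ([disjoint V & W] && [disjoint U & V :|: W]) ->
  tnat (xi F) X k (xi F X k x) U V W = 0.
Proof.
rewrite ffunE; case/nandP=> [ndVW | ndUVW]; first by rewrite xi_eq0.
have [dVW | ndVW] := boolP [disjoint V & W]; last by rewrite xi_eq0.
by apply: tagF_eq0 (tagF_xi _ dVW) _; rewrite xi_eq0 // scaler0.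
Qed.

Lemma xi_tfun_xi_eq0 U V W : ~~ ([disjoint U & V] && [disjoint U :|: V & W]) ->
  xi (tfun F) X k (xi F X k x) U V W = 0.
Proof.
case/nandP=> [ndUV | ndUVW]; first by rewrite xi_eq0 // ffunE.
have [dUV | ndUV] := boolP [disjoint U & V]; last by rewrite xi_eq0 // ffunE.
by apply: tagF_eq0 (tagF_xi_tfun _ _ dUV) _; rewrite xi_eq0 // scaler0.
Qed.

End Composites.
End XiComponents.

Theorem mainTheorem9 (R : comPzRingType) (C : category) (A B : catob C)
    (eta : cathom A B) (n : nat) (F : funct R eta n) :
  is_functor F ->
  forall (X : tup eta n) (k : int) (x : cmod (fobj (tfun F) X) k),
    tnat (xi F) X k (xi F X k x) = xi (tfun F) X k (xi F X k x).
Proof.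
move=> _ X k x; apply/ffunP=> U; apply/ffunP=> V; apply/ffunP=> W.
have [dUVW | ndUVW] := boolP ([disjoint V & W] && [disjoint U & V :|: W]).
- have /andP[dVW _] := dUVW; have := dUVW; rewrite disjoint_setUA => /andP[dUV _].
  apply: tagF_inj; rewrite tagF_tnat_xi_xi // tagF_xi_tfun_xi -?disjoint_setUA //.
  by rewrite sgn_cocycle.
- by rewrite tnat_xi_xi_eq0 // xi_tfun_xi_eq0 // -disjoint_setUA.
Qed.
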